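(* Let $f:\mathbb R\to\mathbb C$ be defined by $f(t)=\sum_{m=1}^{\infty}\frac{1}{m!}e^{i2^{-m}t}$. Then $f$ is smooth, its Taylor series at $0$ has infinite radius of convergence and converges to $f(t)$ for every $t\in\mathbb R$, and for every $t\in\mathbb R$ the series $\hat f(t)$ converges with $\hat f(t)=f(0)=e-1$.
   Context: For a smooth (possibly complex-valued) function $f$ and a point $t$, $\hat f(t)$ denotes the series $\hat f(t):=\sum_{n=0}^{\infty}\frac{(-1)^n}{n!}\,t^n f^{(n)}(t)$ and also its sum when it converges. *)

(* classical reals. Complex numbers are represented by
   (real part, imaginary part) pairs of real-valued functions. *)
From Stdlib Require Import Reals Arith.
Open Scope R_scope.

(* m-th term (m >= 1, written m = k+1) of Re f(t) and Im f(t), where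
   f(t) = sum_{m>=1} (1/m!) e^{i 2^{-m} t}. *)
Definition f_re_term (t : R) (k : nat) : R :=
  cos (t / 2 ^ (S k)) / INR (fact (S k)).
Definition f_im_term (t : R) (k : nat) : R :=
  sin (t / 2 ^ (S k)) / INR (fact (S k)).

(* D is a sequence of successive derivatives: D (S n) = (D n)' everywhere.
   A complex-valued function of a real variable u = ur + i ui is smooth iff
   such sequences exist for ur and ui (with Dr 0 = ur, Di 0 = ui). *)
Definition derivative_tower (D : nat -> R -> R) : Prop :=
  forall (n : nat) (t : R), derivable_pt_lim (D n) t (D (S n) t).

Definition cmod (a b : R) : R := sqrt (a ^ 2 + b ^ 2).

From Stdlib Require Import Reals Arith Lra FunctionalExtensionality.
From Coquelicot Require Import Coquelicot.
Open Scope R_scope.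

(* Write f(t) = Σ_k b_k e^{i a_k t} with b_k = 1/(k+1)! and a_k = 2^{-(k+1)}.
   Since |a_k| <= 1, the termwise differentiated series converge normally, so
   f is smooth and every derivative of f is bounded by Σ_k b_k = e - 1.  For a
   smooth function with uniformly bounded derivatives the Lagrange remainder
   M |y - x|^(N+1) / (N+1)! tends to 0, so the Taylor series at ANY point x
   converges to f(y) for every y.  Expanding at x = 0 gives the Taylor series
   of f; expanding at x = t and evaluating at y = 0 is exactly \hat f(t) = f(0). *)

(* [is_series_ext] at type [R], so that its side goals can be closed by [ring]. *)
Lemma is_series_ext_R (u v : nat -> R) (l : R) :
  (forall n, u n = v n) -> is_series u l -> is_series v l.
Proof. apply is_series_ext. Qed.

Lemma is_series_exp x : is_series (fun n => x ^ n / INR (fact n)) (exp x).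
Proof.
  apply (is_series_ext_R _ _ _ (fun n => eq_refl) (is_exp_Reals x)).
Qed.

Lemma cos_add_PI2 x : cos (x + PI / 2) = - sin x.
Proof. rewrite cos_plus, cos_PI2, sin_PI2; ring. Qed.

Lemma derivable_pt_lim_sum_f_R0 (f f' : nat -> R -> R) (x : R) (N : nat) :
  (forall k, derivable_pt_lim (f k) x (f' k x)) ->
  derivable_pt_lim (fun y => sum_f_R0 (fun k => f k y) N) x (sum_f_R0 (fun k => f' k x) N).
Proof.
  intros Hf. induction N as [|N IH]; simpl.
  - apply Hf.
  - exact (derivable_pt_lim_plus _ (f (S N)) x _ _ IH (Hf (S N))).
Qed.

Section CosineSeries.

Variables (b a : nat -> R) (p : R).
Hypothesis b_abs_summable : ex_series (fun k => Rabs (b k)).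
Hypothesis a_bounded : forall k, Rabs (a k) <= 1.

(* The real part of e^{ip} (d/dt)^n (b_k e^{i a_k t}); the phase p lets one
   family of real series describe both the real (p = 0) and the imaginary
   (p = -π/2) part of the derivatives of Σ_k b_k e^{i a_k t}. *)
Definition cos_wave (n : nat) (t : R) (k : nat) : R :=
  b k * a k ^ n * cos (a k * t + p + INR n * (PI / 2)).

Definition cos_series (n : nat) (t : R) : R := Series (cos_wave n t).

Lemma cos_wave_bound n t k : Rabs (cos_wave n t k) <= Rabs (b k).
Proof.
  unfold cos_wave. rewrite !Rabs_mult, <- RPow_abs.
  set (c := Rabs (cos _)).
  assert (Hc : c <= 1) by apply Rabs_le, COS_bound.
  assert (Ha : Rabs (a k) ^ n <= 1).
  { rewrite <- (pow1 n). apply pow_incr. split; [apply Rabs_pos | apply a_bounded]. }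
  assert (0 <= c) by apply Rabs_pos.
  assert (0 <= Rabs (a k) ^ n) by apply pow_le, Rabs_pos.
  assert (0 <= Rabs (b k)) by apply Rabs_pos.
  assert (Rabs (a k) ^ n * c <= 1) by nra.
  nra.
Qed.

Lemma ex_series_abs_cos_wave n t : ex_series (fun k => Rabs (cos_wave n t k)).
Proof.
  apply (@ex_series_le R_AbsRing R_CompleteNormedModule _ (fun k => Rabs (b k)));
    [|exact b_abs_summable].
  intros k. change (Rabs (Rabs (cos_wave n t k)) <= Rabs (b k)).
  rewrite Rabs_Rabsolu. apply cos_wave_bound.
Qed.

Lemma ex_series_cos_wave n t : ex_series (cos_wave n t).
Proof. apply ex_series_Rabs, ex_series_abs_cos_wave. Qed.

Lemma cos_series_bound n t : Rabs (cos_series n t) <= Series (fun k => Rabs (b k)).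
Proof.
  apply (Rle_trans _ (Series (fun k => Rabs (cos_wave n t k)))).
  - apply Series_Rabs, ex_series_abs_cos_wave.
  - apply Series_le; [|exact b_abs_summable].
    intros k; split; [apply Rabs_pos | apply cos_wave_bound].
Qed.

Lemma cos_wave_derive n t k :
  derivable_pt_lim (fun t => cos_wave n t k) t (cos_wave (S n) t k).
Proof.
  apply is_derive_Reals. unfold cos_wave. auto_derive; [exact I|].
  rewrite S_INR, Rmult_plus_distr_r, Rmult_1_l, <- Rplus_assoc, cos_add_PI2. simpl. ring.
Qed.

Definition cos_wave_CVN n (r : posreal) : CVN_r (fun k y => cos_wave n y k) r.
Proof.
  exists (fun k => Rabs (b k)), (Series (fun k => Rabs (b k))). split.
  - apply is_lim_seq_Reals.
    apply (is_lim_seq_ext (sum_f_R0 (fun k => Rabs (b k)))).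
    + intros N. apply sum_eq. intros k _. symmetry. apply Rabs_Rabsolu.
    + apply is_lim_seq_Reals, is_series_Reals, Series_correct, b_abs_summable.
  - intros k y _. apply cos_wave_bound.
Defined.

Lemma cos_series_tower : derivative_tower cos_series.
Proof.
  intros n t.
  assert (Hr : 0 < Rabs t + 1) by (pose proof (Rabs_pos t); lra).
  destruct (CVN_CVU_r _ (mkposreal _ Hr) (cos_wave_CVN (S n) _) t ltac:(simpl; lra))
    as [e He].
  apply (CVU_derivable (SP (fun k y => cos_wave n y k)) _ _ _ t e He).
  - intros x _. apply is_series_Reals, Series_correct, ex_series_cos_wave.
  - intros N x _. apply derivable_pt_lim_sum_f_R0. intros k. apply cos_wave_derive.
  - unfold Boule. rewrite Rminus_diag, Rabs_R0. apply cond_pos.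
Qed.

End CosineSeries.

Section BoundedTower.

Variables (D : nat -> R -> R) (M : R).
Hypothesis D_tower : derivative_tower D.
Hypothesis D_bounded : forall n x, Rabs (D n x) <= M.

Lemma Derive_n_tower n : Derive_n (D 0) n = D n.
Proof.
  induction n as [|n IH]; [reflexivity|].
  apply functional_extensionality. intros x. simpl. rewrite IH.
  apply is_derive_unique, is_derive_Reals, D_tower.
Qed.

Lemma ex_derive_n_tower n x : ex_derive_n (D 0) n x.
Proof.
  destruct n as [|n]; [exact I|]. simpl. rewrite Derive_n_tower.
  exists (D (S n) x). apply is_derive_Reals, D_tower.
Qed.

Lemma tower_taylor_remainder x y N : x < y ->
  Rabs (D 0 y - sum_f_R0 (fun n => D n x / INR (fact n) * (y - x) ^ n) N)
    <= M * (Rabs (y - x) ^ S N / INR (fact (S N))).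
Proof.
  intros Hxy.
  destruct (Taylor_Lagrange (D 0) N x y Hxy (fun t _ k _ => ex_derive_n_tower k t))
    as [z [_ Hz]].
  rewrite Derive_n_tower in Hz. rewrite Hz.
  replace (sum_f_R0 (fun m => (y - x) ^ m / INR (fact m) * Derive_n (D 0) m x) N)
    with (sum_f_R0 (fun n => D n x / INR (fact n) * (y - x) ^ n) N).
  2: { apply sum_eq. intros m _. rewrite Derive_n_tower. unfold Rdiv. ring. }
  replace (_ + _ - _) with ((y - x) ^ S N / INR (fact (S N)) * D (S N) z) by ring.
  assert (Hfact : 0 < INR (fact (S N))) by apply INR_fact_lt_0.
  rewrite Rabs_mult, Rmult_comm. unfold Rdiv.
  rewrite Rabs_mult, <- RPow_abs, Rabs_inv, (Rabs_pos_eq (INR _)) by lra.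
  apply Rmult_le_compat_r; [|apply D_bounded].
  apply Rmult_le_pos; [apply pow_le, Rabs_pos | apply Rlt_le, Rinv_0_lt_compat, Hfact].
Qed.

Lemma tower_taylor_lt x y : x < y ->
  is_series (fun n => D n x / INR (fact n) * (y - x) ^ n) (D 0 y).
Proof.
  intros Hxy.
  set (T N := sum_f_R0 (fun n => D n x / INR (fact n) * (y - x) ^ n) N).
  assert (Hbound : is_lim_seq (fun N => M * (Rabs (y - x) ^ S N / INR (fact (S N)))) 0).
  { rewrite <- (Rmult_0_r M). apply (is_lim_seq_scal_l _ M 0).
    apply (is_lim_seq_incr_1 (fun n => Rabs (y - x) ^ n / INR (fact n))).
    apply is_lim_seq_Reals, cv_speed_pow_fact. }
  assert (Hrem : is_lim_seq (fun N => D 0 y - T N) 0).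
  { apply is_lim_seq_abs_0.
    refine (is_lim_seq_le_le (fun _ => 0) _ _ 0 _ (is_lim_seq_const 0) Hbound).
    intros N. split; [apply Rabs_pos | apply tower_taylor_remainder, Hxy]. }
  apply is_series_Reals, is_lim_seq_Reals.
  apply (is_lim_seq_ext (fun N => D 0 y - (D 0 y - T N))); [intros N; unfold T; ring|].
  pose proof (is_lim_seq_minus' _ _ _ _ (is_lim_seq_const (D 0 y)) Hrem) as H.
  rewrite Rminus_0_r in H. exact H.
Qed.

End BoundedTower.

Lemma is_series_taylor_center (c : nat -> R) (x : R) :
  is_series (fun n => c n / INR (fact n) * (x - x) ^ n) (c 0%nat).
Proof.
  apply is_series_Reals, is_lim_seq_Reals.
  apply (is_lim_seq_ext (fun _ => c 0%nat)); [|apply is_lim_seq_const].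
  intros N. rewrite Rminus_diag. induction N as [|N IH]; simpl.
  - field.
  - rewrite <- IH. ring.
Qed.

(* Taylor-Lagrange only expands to the right of the centre; the case y < x is
   reduced to -x < -y through this reflection. *)
Lemma derivative_tower_reflect (D : nat -> R -> R) :
  derivative_tower D -> derivative_tower (fun n s => (-1) ^ n * D n (- s)).
Proof.
  intros HD n s. apply is_derive_Reals.
  assert (Hd : is_derive (D n) (- s) (D (S n) (- s))) by apply is_derive_Reals, HD.
  auto_derive; [exists (D (S n) (- s)); exact Hd|].
  change (Derive (fun x => D n x) (- s)) with (Derive (D n) (- s)).
  rewrite (is_derive_unique _ _ _ Hd). simpl. ring.
Qed.

Lemma bounded_tower_taylor (D : nat -> R -> R) (M : R) :
  derivative_tower D -> (forall n x, Rabs (D n x) <= M) ->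
  forall x y, is_series (fun n => D n x / INR (fact n) * (y - x) ^ n) (D 0%nat y).
Proof.
  intros HD HM x y. destruct (total_order_T x y) as [[Hxy | <-] | Hyx].
  - exact (tower_taylor_lt D M HD HM x y Hxy).
  - apply is_series_taylor_center.
  - assert (HM' : forall n s, Rabs ((-1) ^ n * D n (- s)) <= M).
    { intros n s. rewrite Rabs_mult, pow_1_abs, Rmult_1_l. apply HM. }
    assert (H := tower_taylor_lt _ M (derivative_tower_reflect D HD) HM' (- x) (- y)
                   ltac:(lra)).
    simpl in H. rewrite Rmult_1_l, !Ropp_involutive in H.
    refine (is_series_ext_R _ _ _ _ H). intros n.
    assert (Hsq : (-1) ^ n * (-1) ^ n = 1).
    { rewrite <- Rpow_mult_distr. replace (-1 * -1) with 1 by ring. apply pow1. }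
    replace (- y - - x) with (-1 * (y - x)) by ring. rewrite Rpow_mult_distr.
    transitivity ((-1) ^ n * (-1) ^ n * (D n x / INR (fact n) * (y - x) ^ n));
      [unfold Rdiv; ring | rewrite Hsq; ring].
Qed.

Lemma bounded_tower_hat (D : nat -> R -> R) (M : R) :
  derivative_tower D -> (forall n x, Rabs (D n x) <= M) ->
  forall t, is_series (fun n => (-1) ^ n / INR (fact n) * t ^ n * D n t) (D 0%nat 0).
Proof.
  intros HD HM t.
  refine (is_series_ext_R _ _ _ _ (bounded_tower_taylor D M HD HM t 0)). intros n.
  replace (0 - t) with (-1 * t) by ring. rewrite Rpow_mult_distr. unfold Rdiv. ring.
Qed.

Lemma cmod_le_Rabs_add x y : cmod x y <= Rabs x + Rabs y.
Proof.
  unfold cmod. pose proof (Rabs_pos x). pose proof (Rabs_pos y).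
  rewrite <- (sqrt_pow2 (Rabs x + Rabs y)) by lra. apply sqrt_le_1_alt.
  rewrite <- (pow2_abs x), <- (pow2_abs y). nra.
Qed.

Lemma ex_series_cmod_taylor (u v : nat -> R) (M r : R) :
  (forall n, Rabs (u n) <= M) -> (forall n, Rabs (v n) <= M) ->
  ex_series (fun n => cmod (u n) (v n) / INR (fact n) * r ^ n).
Proof.
  intros Hu Hv.
  apply (@ex_series_le R_AbsRing R_CompleteNormedModule _
           (fun n => 2 * M * (Rabs r ^ n / INR (fact n)))).
  - intros n. change (Rabs (cmod (u n) (v n) / INR (fact n) * r ^ n)
                        <= 2 * M * (Rabs r ^ n / INR (fact n))).
    assert (Hc : cmod (u n) (v n) <= 2 * M).
    { pose proof (cmod_le_Rabs_add (u n) (v n)). specialize (Hu n). specialize (Hv n). lra. }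
    assert (H0 : 0 <= cmod (u n) (v n)) by apply sqrt_pos.
    assert (Hf : 0 < INR (fact n)) by apply INR_fact_lt_0.
    assert (Hq : 0 <= Rabs r ^ n / INR (fact n))
      by (apply Rdiv_le_0_compat; [apply pow_le, Rabs_pos | exact Hf]).
    replace (cmod (u n) (v n) / INR (fact n) * r ^ n)
      with (cmod (u n) (v n) * (r ^ n / INR (fact n))) by (unfold Rdiv; ring).
    rewrite Rabs_mult, (Rabs_pos_eq (cmod _ _)) by exact H0.
    unfold Rdiv. rewrite Rabs_mult, <- RPow_abs, Rabs_inv, (Rabs_pos_eq (INR _)) by lra.
    apply Rmult_le_compat_r; [exact Hq | exact Hc].
  - exists (2 * M * exp (Rabs r)).
    exact (is_series_scal_l (2 * M) _ _ (is_series_exp (Rabs r))).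
Qed.

Definition inv_fact_succ (k : nat) : R := / INR (fact (S k)).
Definition inv_pow2_succ (k : nat) : R := / 2 ^ S k.

Lemma is_series_inv_fact_succ : is_series inv_fact_succ (exp 1 - 1).
Proof.
  apply (is_series_ext_R (fun k => 1 ^ S k / INR (fact (S k)))).
  - intros k. unfold inv_fact_succ. rewrite pow1. apply Rmult_1_l.
  - apply (is_series_incr_1 (fun n => 1 ^ n / INR (fact n))).
    match goal with |- is_series _ ?l => replace l with (exp 1) end.
    + apply is_series_exp.
    + simpl. unfold plus. simpl. field.
Qed.

Lemma is_series_abs_inv_fact_succ :
  is_series (fun k => Rabs (inv_fact_succ k)) (exp 1 - 1).
Proof.
  refine (is_series_ext_R _ _ _ _ is_series_inv_fact_succ). intros k.
  symmetry. apply Rabs_pos_eq, Rlt_le, Rinv_0_lt_compat, INR_fact_lt_0.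
Qed.

Lemma ex_series_abs_inv_fact_succ : ex_series (fun k => Rabs (inv_fact_succ k)).
Proof. eexists. apply is_series_abs_inv_fact_succ. Qed.

Lemma Rabs_inv_pow2_succ_le_1 k : Rabs (inv_pow2_succ k) <= 1.
Proof.
  unfold inv_pow2_succ. assert (H : 1 <= 2 ^ S k) by (apply pow_R1_Rle; lra).
  rewrite Rabs_pos_eq by (apply Rlt_le, Rinv_0_lt_compat; lra).
  rewrite <- Rinv_1. apply Rinv_le_contravar; lra.
Qed.

(* [f_deriv_phase p n t] is Re (e^{ip} f^(n)(t)). *)
Definition f_deriv_phase (p : R) : nat -> R -> R :=
  cos_series inv_fact_succ inv_pow2_succ p.

Lemma f_deriv_phase_tower p : derivative_tower (f_deriv_phase p).
Proof.
  exact (cos_series_tower _ _ p ex_series_abs_inv_fact_succ Rabs_inv_pow2_succ_le_1).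
Qed.

Lemma f_deriv_phase_bound p n t : Rabs (f_deriv_phase p n t) <= exp 1 - 1.
Proof.
  rewrite <- (is_series_unique _ _ is_series_abs_inv_fact_succ).
  exact (cos_series_bound _ _ p ex_series_abs_inv_fact_succ Rabs_inv_pow2_succ_le_1 n t).
Qed.

Lemma f_deriv_phase_0 p (g : R -> R) :
  (forall t, infinite_sum (fun k => cos (t / 2 ^ S k + p) / INR (fact (S k))) (g t)) ->
  f_deriv_phase p 0 = g.
Proof.
  intros Hg. apply functional_extensionality. intros t. symmetry.
  apply (uniqueness_sum _ _ _ (Hg t)), is_series_Reals.
  refine (is_series_ext_R _ _ _ _ (Series_correct _ (ex_series_cos_wave _ _ p
            ex_series_abs_inv_fact_succ Rabs_inv_pow2_succ_le_1 0 t))).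
  intros k. unfold cos_wave, inv_fact_succ, inv_pow2_succ.
  replace (/ 2 ^ S k * t + p + INR 0 * (PI / 2)) with (t / 2 ^ S k + p)
    by (simpl; unfold Rdiv; ring).
  unfold Rdiv. ring.
Qed.

Lemma f_deriv_phase_at_0 p : f_deriv_phase p 0 0 = cos p * (exp 1 - 1).
Proof.
  apply is_series_unique.
  refine (is_series_ext_R _ _ _ _ (is_series_scal_l (cos p) _ _ is_series_inv_fact_succ)).
  intros k. unfold cos_wave.
  replace (inv_pow2_succ k * 0 + p + INR 0 * (PI / 2)) with p by (simpl; ring).
  change (cos p * inv_fact_succ k = inv_fact_succ k * inv_pow2_succ k ^ 0 * cos p).
  simpl. ring.
Qed.

Lemma f_re_term_phase t : f_re_term t = fun k => cos (t / 2 ^ S k + 0) / INR (fact (S k)).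
Proof. apply functional_extensionality. intros k. rewrite Rplus_0_r. reflexivity. Qed.

Lemma f_im_term_phase t :
  f_im_term t = fun k => cos (t / 2 ^ S k + - (PI / 2)) / INR (fact (S k)).
Proof.
  apply functional_extensionality. intros k. unfold f_im_term.
  rewrite cos_plus, cos_neg, sin_neg, cos_PI2, sin_PI2. f_equal. ring.
Qed.

Theorem mainTheorem17 :
  forall fr fi : R -> R,
    (forall t : R, infinite_sum (f_re_term t) (fr t)) ->
    (forall t : R, infinite_sum (f_im_term t) (fi t)) ->
    exists Dr Di : nat -> R -> R,
      Dr 0%nat = fr /\ Di 0%nat = fi /\
      derivative_tower Dr /\ derivative_tower Di /\
      (forall r : R, exists l : R,
          infinite_sum (fun n => cmod (Dr n 0) (Di n 0) / INR (fact n) * r ^ n) l) /\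
      (forall t : R,
          infinite_sum (fun n => Dr n 0 / INR (fact n) * t ^ n) (fr t) /\
          infinite_sum (fun n => Di n 0 / INR (fact n) * t ^ n) (fi t)) /\
      fr 0 = exp 1 - 1 /\ fi 0 = 0 /\
      (forall t : R,
          infinite_sum (fun n => (-1) ^ n / INR (fact n) * t ^ n * Dr n t) (fr 0) /\
          infinite_sum (fun n => (-1) ^ n / INR (fact n) * t ^ n * Di n t) (fi 0)).
Proof.
  intros fr fi Hr Hi.
  setoid_rewrite f_re_term_phase in Hr. setoid_rewrite f_im_term_phase in Hi.
  rewrite <- (f_deriv_phase_0 0 fr Hr), <- (f_deriv_phase_0 _ fi Hi).
  assert (Htaylor : forall p t, is_series (fun n => f_deriv_phase p n 0 / INR (fact n) * t ^ n)
                                      (f_deriv_phase p 0 t)).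
  { intros p t. pose proof (bounded_tower_taylor _ _ (f_deriv_phase_tower p)
                              (f_deriv_phase_bound p) 0 t) as H.
    rewrite Rminus_0_r in H. exact H. }
  pose proof (fun p => bounded_tower_hat _ _ (f_deriv_phase_tower p)
                         (f_deriv_phase_bound p)) as Hhat.
  exists (f_deriv_phase 0), (f_deriv_phase (- (PI / 2))).
  split; [reflexivity|]. split; [reflexivity|].
  split; [apply f_deriv_phase_tower|]. split; [apply f_deriv_phase_tower|].
  split.
  { intros r. destruct (ex_series_cmod_taylor _ _ _ r (fun n => f_deriv_phase_bound 0 n 0)
                          (fun n => f_deriv_phase_bound (- (PI / 2)) n 0)) as [l Hl].
    exists l. apply is_series_Reals, Hl. }
  split.
  { intros t. split; apply is_series_Reals, Htaylor. }
  split; [rewrite f_deriv_phase_at_0, cos_0; ring|].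
  split; [rewrite f_deriv_phase_at_0, cos_neg, cos_PI2; ring|].
  intros t. split; apply is_series_Reals, Hhat.
Qed.
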